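(* There exists a one-sided non-adaptive tester for $k$-monotonicity of functions $f\colon\{0,1\}^d\to\{0,1\}$ with query complexity $q(d,\varepsilon,k)=2^{O(\sqrt{d}\cdot\log d\cdot\log(1/\varepsilon))}$ (in particular, independent of $k$).
   Context: The hypercube $\{0,1\}^d$ is ordered coordinatewise. A function $f\colon\{0,1\}^d\to\{0,1\}$ is $k$-monotone if there is no chain $x_1\preceq\cdots\preceq x_{k+1}$ with $f(x_1)=1$ and $f(x_i)\neq f(x_{i+1})$ for all $i\in[k]$. Distance is the normalized Hamming distance $\Pr_x[f(x)\neq g(x)]$ over uniform $x$; $f$ is $\varepsilon$-far from $k$-monotone if its distance to every $k$-monotone function is at least $\varepsilon$. A tester, given $\varepsilon$ and query access to $f$, accepts $k$-monotone $f$ with probability at least $2/3$ and rejects $\varepsilon$-far $f$ with probability at least $2/3$; it is one-sided if it accepts $k$-monotone functions with probability $1$, and non-adaptive if its queries do not depend on previous answers. *)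

From HB Require Import structures.
From mathcomp Require Import all_boot all_order all_algebra.
From mathcomp Require Import reals.
From mathcomp Require Import sequences exp.
Set Implicit Arguments. Unset Strict Implicit. Unset Printing Implicit Defensive.
Import Order.TTheory GRing.Theory Num.Theory.
Local Open Scope ring_scope.

Definition cube (d : nat) := {ffun 'I_d -> bool}.

Definition cube_le (d : nat) (x y : cube d) : bool := [forall i, x i ==> y i].

Definition k_monotone (d k : nat) (f : cube d -> bool) : Prop :=
  ~ exists c : nat -> cube d,
      [/\ f (c 0%N) = true,
          forall i, (i < k)%N -> cube_le (c i) (c i.+1)
        & forall i, (i < k)%N -> f (c i) != f (c i.+1)].

Definition dist (R : numFieldType) (d : nat) (f g : cube d -> bool) : R :=
  (#|[pred x : cube d | f x != g x]|%:R) / ((2 ^ d)%N%:R).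

Definition far_from_k_monotone (R : numFieldType) (d k : nat) (eps : R)
    (f : cube d -> bool) : Prop :=
  forall g : cube d -> bool, k_monotone k g -> eps <= dist R f g.

(* A randomized non-adaptive algorithm making q queries: a finite probability
   space of seeds Om with weights p; on seed w it queries the points Q w i
   (i < q), fixed independently of f, and outputs D w (answers). *)
Definition accept_prob (R : numFieldType) (d q : nat) (Om : finType)
    (p : Om -> R) (Q : Om -> 'I_q -> cube d) (D : Om -> ('I_q -> bool) -> bool)
    (f : cube d -> bool) : R :=
  \sum_(w : Om | D w (fun i => f (Q w i))) p w.

Definition one_sided_na_tester (R : numFieldType) (d k : nat) (eps : R) (q : nat)
    (Om : finType) (p : Om -> R) (Q : Om -> 'I_q -> cube d)
    (D : Om -> ('I_q -> bool) -> bool) : Prop :=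
  [/\ forall w, 0 <= p w,
      \sum_(w : Om) p w = 1,
      (forall f, k_monotone k f -> accept_prob p Q D f = 1)
    & (forall f, far_from_k_monotone k eps f -> accept_prob p Q D f <= 1 / 3%:R)].

From HB Require Import structures.
From mathcomp Require Import all_boot all_order all_algebra.
From mathcomp Require Import reals.
From mathcomp Require Import sequences exp.
From mathcomp Require Import boolp archimedean ring lra zify.
Import Order.TTheory GRing.Theory Num.Theory.
Local Open Scope ring_scope.
Set Implicit Arguments. Unset Strict Implicit. Unset Printing Implicit Defensive.

(* A function is repaired to a k-monotone one by deleting, one at a time,
   violating chains (alternating chains of length k starting at a 1-point)
   inside the middle band of the cube and then extending f from what is left;
   this changes f only off the band and on k + 1 points per deleted chain.
   The band of width O(b sqrt d) misses a 4^-b fraction of the cube, so if f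
   is eps-far then Omega(eps 2^d / k) band points start a violating chain.
   Such a chain climbs one weight level per step and stays in the band, hence
   k is at most the band width and the whole chain lies above its start at
   distance O(b sqrt d).  The tester samples O(sqrt d log(1/eps) / eps) points
   and queries everything above each sample within that distance, i.e.
   d^O(sqrt d log(1/eps)) points, and rejects only on a violation it sees. *)

Section CubeOrder.
Variable d : nat.

Lemma cube_le_refl (x : cube d) : cube_le x x.
Proof. by apply/forallP => i; rewrite implybb. Qed.

Lemma cube_le_trans (x y z : cube d) : cube_le x y -> cube_le y z -> cube_le x z.
Proof.
move=> /forallP xy /forallP yz; apply/forallP => i; apply/implyP => xi.
by move: (xy i) (yz i); rewrite xi /= => ->.
Qed.

End CubeOrder.

Section Chains.
Variables (d k : nat) (f : cube d -> bool).

Definition alternating (c : nat -> cube d) (j : nat) :=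
  (forall i, (i < j)%N -> cube_le (c i) (c i.+1)) /\
  (forall i, (i < j)%N -> f (c i) != f (c i.+1)).

Lemma alternating_le c j i i' :
  alternating c j -> (i <= i')%N -> (i' <= j)%N -> cube_le (c i) (c i').
Proof.
move=> [c_le _] + i'j; elim: i' i'j => [|i' IH] i'j.
  by rewrite leqn0 => /eqP ->; apply: cube_le_refl.
rewrite leq_eqVlt => /orP [/eqP ->|ii']; first exact: cube_le_refl.
exact: cube_le_trans (IH (ltnW i'j) ii') (c_le _ i'j).
Qed.

Lemma alternating_parity c j i :
  alternating c j -> f (c 0%N) -> (i <= j)%N -> f (c i) = ~~ odd i.
Proof.
move=> [_ c_ne] c0; elim: i => [|i IH] ij //=.
by move: (c_ne i ij); rewrite (IH (ltnW ij)); case: (f _); case: (odd i).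
Qed.

Lemma alternating_take c j j' : alternating c j -> (j' <= j)%N -> alternating c j'.
Proof.
move=> [c_le c_ne] j'j; split => i ij'; [apply: c_le | apply: c_ne];
  exact: leq_trans ij' j'j.
Qed.

Definition chain_in (A : {set cube d}) (c : nat -> cube d) (j : nat) :=
  forall i, (i <= j)%N -> c i \in A.

Definition violation (A : {set cube d}) (c : nat -> cube d) :=
  [/\ f (c 0%N), chain_in A c k & alternating c k].

Section Extension.
Variable A : {set cube d}.
Hypothesis no_violation : ~ exists c, violation A c.

Definition reach (x : cube d) (j : nat) := exists c,
  [/\ f (c 0%N), chain_in A c j, alternating c j & cube_le (c j) x].

Lemma reach_lt_k x j : reach x j -> (j < k)%N.
Proof.
move=> [c [c0 cA cj _]]; rewrite ltnNge; apply/negP => kj.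
apply: no_violation; exists c; split => //; last exact: alternating_take cj kj.
by move=> i ik; apply: cA; exact: leq_trans ik kj.
Qed.

Lemma reach_le x j j' : reach x j -> (j' <= j)%N -> reach x j'.
Proof.
move=> [c [c0 cA cj cx]] j'j; exists c; split => //.
- by move=> i ij'; apply: cA; exact: leq_trans ij' j'j.
- exact: alternating_take cj j'j.
- exact: cube_le_trans (alternating_le cj j'j (leqnn _)) cx.
Qed.

Lemma reach_mono x y j : reach x j -> cube_le x y -> reach y j.
Proof. by move=> [c [c0 cA cj cx]] xy; exists c; split => //; exact: cube_le_trans xy. Qed.

Lemma reach_max x j : reach x j -> exists m, [/\ (j <= m)%N, reach x m & ~ reach x m.+1].
Proof.
move=> xj; pose P m := `[< reach x m >] && (j <= m)%N.
have exP : exists m, P m by exists j; rewrite /P leqnn andbT; exact: asboolT.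
have boundP m : P m -> (m <= k)%N by case/andP => /asboolP /reach_lt_k /ltnW.
case: (ex_maxnP exP boundP) => m /andP [/asboolP xm jm] m_max.
exists m; split => // xm1.
by have := m_max m.+1; rewrite /P (asboolT xm1) (leq_trans jm) // ltnn => /(_ isT).
Qed.

Lemma reach_max_uniq x m m' :
  reach x m -> ~ reach x m.+1 -> reach x m' -> ~ reach x m'.+1 -> m = m'.
Proof.
move=> xm xm1 xm' xm'1; apply/eqP; rewrite eqn_leq; apply/andP; split.
  by rewrite leqNgt; apply/negP => lt; apply: xm'1 (reach_le xm lt).
by rewrite leqNgt; apply/negP => lt; apply: xm1 (reach_le xm' lt).
Qed.

Definition extension (x : cube d) : bool :=
  `[< exists m, [/\ reach x m, ~ reach x m.+1 & ~~ odd m] >].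

Lemma extension_max x m : reach x m -> ~ reach x m.+1 -> extension x = ~~ odd m.
Proof.
move=> xm xm1; apply/asboolP/idP => [[m' [xm' xm'1 m'_even]]|m_even].
  by rewrite (reach_max_uniq xm xm1 xm' xm'1).
by exists m.
Qed.

Lemma extension_unreached x : ~ reach x 0%N -> extension x = false.
Proof. by move=> x0; apply/asboolP => -[m [xm _ _]]; apply: x0 (reach_le xm (leq0n _)). Qed.

Lemma reach_step x j a :
  reach x j -> a \in A -> cube_le x a -> f a = odd j -> reach a j.+1.
Proof.
move=> [c [c0 cA cj cx]] aA xa fa.
pose c' i := if i == j.+1 then a else c i.
have c'E i : (i <= j)%N -> c' i = c i.
  by move=> ij; rewrite /c' ifF //; apply/negbTE; rewrite neq_ltn ltnS ij.
have [c_le c_ne] := cj.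
exists c'; split.
- by rewrite c'E.
- move=> i; rewrite leq_eqVlt => /orP [/eqP ->|ij]; first by rewrite /c' eqxx.
  by rewrite c'E //; apply: cA.
- split => i; rewrite ltnS leq_eqVlt => /orP [/eqP ->|ij].
  + by rewrite c'E // /c' eqxx; exact: cube_le_trans cx xa.
  + by rewrite !c'E ?(ltnW ij) //; apply: c_le.
  + by rewrite c'E // /c' eqxx (alternating_parity cj c0) // fa; case: (odd j).
  + by rewrite !c'E ?(ltnW ij) //; apply: c_ne.
- by rewrite /c' eqxx; apply: cube_le_refl.
Qed.

Lemma extension_agrees a : a \in A -> extension a = f a.
Proof.
move=> aA; have [a0|a0] := EM (reach a 0%N); last first.
  rewrite extension_unreached //; case fa: (f a) => //; exfalso; apply: a0.
  by exists (fun _ => a); split => //; exact: cube_le_refl.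
have [m [_ am am1]] := reach_max a0; rewrite (extension_max am am1).
case fa: (f a); case om: (odd m) => //=; exfalso;
  by apply: am1 (reach_step am aA (cube_le_refl _) _); rewrite fa om.
Qed.

(* Along a chain the maximal reach never decreases and increases at every
   change of value, while it stays below [k]. *)
Lemma extension_k_monotone : k_monotone k extension.
Proof.
move=> [c [c0 c_le c_ne]].
have reach_c0 : reach (c 0%N) 0%N.
  by apply: contraPP c0 => /extension_unreached ->.
have climb i : (i <= k)%N -> exists m, [/\ (i <= m)%N, reach (c i) m,
    ~ reach (c i) m.+1 & extension (c i) = ~~ odd m].
  elim: i => [|i IH] ik.
    have [m [_ cm cm1]] := reach_max reach_c0.
    by exists m; split => //; apply: extension_max.
  have [m [im cm cm1 ext_m]] := IH (ltnW ik).
  have [m' [mm' cm' cm'1]] := reach_max (reach_mono cm (c_le i ik)).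
  exists m'; split => //; last exact: extension_max.
  apply: leq_ltn_trans im _; rewrite ltn_neqAle mm' andbT; apply/eqP => mm'E.
  by move: (c_ne i ik); rewrite ext_m (extension_max cm' cm'1) mm'E eqxx.
have [m [km ck _ _]] := climb k (leqnn k).
by move: (reach_lt_k ck); rewrite ltnNge km.
Qed.

End Extension.

Lemma k_monotone_extension A : ~ (exists c, violation A c) ->
  exists g, k_monotone k g /\ {in A, g =1 f}.
Proof. by move=> noviol; exists (extension A); split; [exact: extension_k_monotone | exact: extension_agrees]. Qed.

Definition violation_sources (A : {set cube d}) : {set cube d} :=
  [set x | `[< exists c, violation A c /\ c 0%N = x >]].

Lemma violation_sources_remove_chain A (c : nat -> cube d) :
  violation_sources (A :\: [set c (nat_of_ord i) | i : 'I_k.+1])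
    \subset violation_sources A :\ c 0%N.
Proof.
apply/subsetP => x; rewrite !inE => /asboolP [c' [[c'0 c'A c'alt] <-]].
have c'A0 := c'A 0%N (leq0n _); rewrite inE in c'A0; case/andP: c'A0 => c'S _.
apply/andP; split.
  by apply: contraNneq c'S => ->; apply/imsetP; exists ord0.
apply/asboolP; exists c'; split => //; split => // i ik.
by have := c'A i ik; rewrite inE => /andP [].
Qed.

Lemma repair_without_violation A : ~ (exists c, violation A c) ->
  exists g, k_monotone k g /\ (#|[set x | f x != g x]| <= #|~: A|)%N.
Proof.
case/k_monotone_extension => g [g_mono gA]; exists g; split => //.
apply: subset_leq_card; apply/subsetP => x; rewrite !inE.
by apply: contraNN => xA; rewrite gA.
Qed.

(* Removing the points of one violating chain costs at most [k.+1] points of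
   [A] and kills at least one source. *)
Lemma repair_cost A : exists g, k_monotone k g /\
  (#|[set x | f x != g x]| <= #|~: A| + k.+1 * #|violation_sources A|)%N.
Proof.
suff cost n B : (#|violation_sources B| <= n)%N -> exists g, k_monotone k g /\
    (#|[set x | f x != g x]| <= #|~: B| + k.+1 * #|violation_sources B|)%N.
  exact: cost _ _ (leqnn _).
elim: n B => [|n IH] B Bn;
  have [[c cB]|/repair_without_violation [g [g_mono g_cost]]] := EM (exists c, violation B c);
  try by exists g; split => //; exact: leq_trans g_cost (leq_addr _ _).
all: have c0 : c 0%N \in violation_sources B by rewrite inE; apply/asboolP; exists c.
  by move: Bn; rewrite leqn0 cards_eq0 => /eqP B0; rewrite B0 inE in c0.
set S := [set c (nat_of_ord i) | i : 'I_k.+1].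
have sources_lt : (#|violation_sources (B :\: S)| < #|violation_sources B|)%N.
  rewrite (cardsD1 (c 0%N) (violation_sources B)) c0 add1n ltnS.
  exact: subset_leq_card (violation_sources_remove_chain B c).
have [g [g_mono g_cost]] := IH (B :\: S) (leq_trans sources_lt Bn).
exists g; split => //; apply: leq_trans g_cost _.
have compl_le : (#|~: (B :\: S)| <= #|~: B| + k.+1)%N.
  rewrite setCD; apply: leq_trans (leq_card_setU _ _) _; rewrite leq_add2l.
  by apply: leq_trans (leq_imset_card _ _) _; rewrite card_ord.
nia.
Qed.

End Chains.

Definition weight d (x : cube d) : nat := (\sum_i x i)%N.

Lemma sum_expr_weight (R : comPzSemiRingType) d (z : R) :
  \sum_(x : cube d) z ^+ weight x = (1 + z) ^+ d.
Proof.
have -> : (1 + z) ^+ d = \prod_(i : 'I_d) \sum_(b : bool) z ^+ b.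
  by rewrite prodr_const card_ord big_bool /= expr1 expr0 addrC.
by rewrite bigA_distr_bigA /=; apply: eq_bigr => x _; rewrite /weight prodrXr.
Qed.

Section RealInequalities.
Variable R : realFieldType.

Lemma bernoulli_ineq (x : R) n : -1 <= x -> 1 + n%:R * x <= (1 + x) ^+ n.
Proof.
move=> x_ge; elim: n => [|n IH]; first by rewrite mul0r addr0 expr0.
have x1 : 0 <= 1 + x by lra.
rewrite exprS; have := ler_wpM2l x1 IH.
have : 0 <= n%:R * x * x by rewrite -mulrA mulr_ge0 // -expr2 sqr_ge0.
by rewrite -natr1; nra.
Qed.

Lemma expr1D_mul1B_le1 (x : R) n : 0 <= x -> n%:R * x <= 1 ->
  (1 + x) ^+ n * (1 - n%:R * x) <= 1.
Proof.
move=> x0 nx1; have [->|n0] := eqVneq n 0%N; first by rewrite expr0 mul0r subr0 mul1r.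
have x1 : x <= 1 by apply: le_trans nx1; rewrite ler_peMl // ler1n lt0n.
have lower : 1 - n%:R * x <= (1 - x) ^+ n.
  have mx : -1 <= - x by lra.
  by have := bernoulli_ineq n mx; rewrite mulrN.
apply: le_trans (ler_wpM2l (exprn_ge0 _ _) lower) _; first lra.
by rewrite -exprMn; apply: exprn_ile1; nra.
Qed.

Lemma one_sub_expr_le_third (u : R) n : 0 <= u -> u <= 1 -> 2 <= n%:R * u ->
  (1 - u) ^+ n <= 1 / 3.
Proof.
move=> u0 u1 nu.
have upper : (1 - u) ^+ n * (1 + u) ^+ n <= 1.
  by rewrite -exprMn; apply: exprn_ile1; nra.
have u_ge : -1 <= u by lra.
have pos : 0 <= (1 - u) ^+ n by apply: exprn_ge0; lra.
have : (1 - u) ^+ n * 3 <= (1 - u) ^+ n * (1 + u) ^+ n.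
  by apply: ler_wpM2l => //; have := bernoulli_ineq n u_ge; lra.
lra.
Qed.

Lemma card_mul_le_sum (T : finType) (S : {set T}) (F : T -> R) (m : R) :
  (forall x, 0 <= F x) -> (forall x, x \in S -> m <= F x) ->
  #|S|%:R * m <= \sum_x F x.
Proof.
move=> F0 Sm; rewrite (bigID (mem S)) /= -[X in X <= _]addr0.
apply: lerD; last exact: sumr_ge0.
by rewrite mulr_natl -sumr_const; apply: ler_sum.
Qed.

End RealInequalities.

Section WeightTails.
Variables (R : realFieldType) (d : nat).

(* Chernoff bound: weigh each point by [z ^+ (2 * weight x)]. *)
Lemma card_weight_tail (z : R) s : 1 <= z ->
  #|[set x : cube d | (d + s <= 2 * weight x)%N]|%:R * z ^+ s <= (z + z^-1) ^+ d.
Proof.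
move=> z1; have z0 : 0 < z by lra.
have sum_bound : #|[set x : cube d | (d + s <= 2 * weight x)%N]|%:R * z ^+ (d + s)
    <= (1 + z ^+ 2) ^+ d.
  rewrite -sum_expr_weight; apply: card_mul_le_sum => x; first by rewrite !exprn_ge0 // ltW.
  by rewrite inE -exprM mulnC => xs; apply: ler_weXn2l.
have factor : 1 + z ^+ 2 = z * (z + z^-1) by rewrite mulrDr mulfV ?gt_eqF // -expr2 addrC.
by move: sum_bound; rewrite factor exprMn exprD mulrCA ler_pM2l // exprn_gt0.
Qed.

Lemma cosh_expr_le (t : R) : 0 <= t -> t <= 1 -> d%:R * t ^+ 2 <= 1 ->
  ((1 + t) + (1 + t)^-1) ^+ d <= 2 ^+ d.+1.
Proof.
move=> t0 t1 dt.
have inv_le : (1 + t)^-1 <= 1 - t + t ^+ 2.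
  rewrite -[_^-1]mulr1 ler_pdivrMl; last lra.
  have t3 : 0 <= t ^+ 3 by exact: exprn_ge0.
  nra.
have u0 : 0 <= t ^+ 2 / 2 by apply: divr_ge0 => //; exact: exprn_ge0.
have du : d%:R * (t ^+ 2 / 2) <= 1 by lra.
have small := expr1D_mul1B_le1 u0 du.
have pos : 0 <= (1 + t ^+ 2 / 2) ^+ d by apply: exprn_ge0; lra.
apply: le_trans (_ : (2 * (1 + t ^+ 2 / 2)) ^+ d <= _).
  apply: lerXn2r; rewrite ?nnegrE; try lra.
  by apply: addr_ge0; [lra | rewrite invr_ge0; lra].
rewrite exprMn [2 ^+ d.+1]exprSr; apply: ler_wpM2l; first exact: exprn_ge0.
by move: small; nra.
Qed.

Lemma card_upper_band N b : (0 < N)%N -> (d <= N * N)%N ->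
  #|[set x : cube d | (d + 2 * b * N <= 2 * weight x)%N]|%:R * 4 ^+ b <= 2 ^+ d.+1 :> R.
Proof.
move=> N0 dN; have N1 : 1 <= N%:R :> R by rewrite ler1n.
set t : R := N%:R^-1.
have t0 : 0 < t by rewrite invr_gt0; lra.
have Nt : N%:R * t = 1 by rewrite mulfV // gt_eqF //; lra.
have t1 : t <= 1 by rewrite invf_le1 //; lra.
have dt : d%:R * t ^+ 2 <= 1.
  have : d%:R <= N%:R * N%:R :> R by rewrite -natrM ler_nat.
  by rewrite expr2; have := ltW t0; nra.
have zN : 2 <= (1 + t) ^+ N.
  have t_ge : -1 <= t by lra.
  by have := bernoulli_ineq N t_ge; rewrite Nt; lra.
have four_le : 4 ^+ b <= (1 + t) ^+ (2 * b * N).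
  have -> : (1 + t) ^+ (2 * b * N) = ((1 + t) ^+ N) ^+ (2 * b) by rewrite -exprM mulnC.
  have -> : 4 ^+ b = 2 ^+ (2 * b) :> R by rewrite exprM expr2 -natrM.
  by apply: lerXn2r; rewrite ?nnegrE //; lra.
apply: le_trans (cosh_expr_le (ltW t0) t1 dt).
apply: le_trans (card_weight_tail _ _); last lra.
by apply: ler_wpM2l.
Qed.

Lemma card_weight_le s : (0 < d)%N ->
  #|[set m : cube d | (weight m <= s)%N]|%:R <= 2 * (2 * d)%:R ^+ s :> R.
Proof.
move=> d0; have d1 : 1 <= d%:R :> R by rewrite ler1n.
have dd0 : 0 < (2 * d)%:R :> R by rewrite natrM; nra.
set z : R := (2 * d)%:R^-1.
have z0 : 0 < z by rewrite invr_gt0.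
have dz : d%:R * z = 1 / 2.
  by rewrite /z natrM invfM mulrCA mulfV ?mulr1 ?div1r // gt_eqF //; lra.
have card_z : #|[set m : cube d | (weight m <= s)%N]|%:R * z ^+ s <= 2.
  apply: le_trans (_ : \sum_(x : cube d) z ^+ weight x <= 2).
    apply: card_mul_le_sum => x; first by rewrite !exprn_ge0 // ltW.
    by rewrite inE => xs; apply: ler_wiXn2l; rewrite ?(ltW z0) // invf_le1 //; nra.
  rewrite sum_expr_weight.
  have dz1 : d%:R * z <= 1 by lra.
  have := expr1D_mul1B_le1 (ltW z0) dz1; rewrite dz.
  have : 0 <= (1 + z) ^+ d by apply: exprn_ge0; lra.
  nra.
have zK : z ^+ s * (2 * d)%:R ^+ s = 1 by rewrite -exprMn mulVf ?expr1n ?gt_eqF.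
have := ler_wpM2r (exprn_ge0 s (ltW dd0)) card_z.
by rewrite -mulrA zK mulr1.
Qed.

End WeightTails.

Section CubeGeometry.
Variable d : nat.

Definition ccompl (x : cube d) : cube d := [ffun i => ~~ x i].
Definition cjoin (x m : cube d) : cube d := [ffun i => x i || m i].
Definition cdiff (x y : cube d) : cube d := [ffun i => y i && ~~ x i].

Lemma card_cube : #|{: cube d}| = (2 ^ d)%N.
Proof. by rewrite card_ffun card_bool card_ord. Qed.

Lemma ccomplK : involutive ccompl.
Proof. by move=> x; apply/ffunP => i; rewrite !ffunE negbK. Qed.

Lemma weight_ccompl (x : cube d) : (weight x + weight (ccompl x) = d)%N.
Proof.
rewrite /weight -big_split /= -[d in RHS]card_ord -sum1_card.
by apply: eq_bigr => i _; rewrite ffunE; case: (x i).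
Qed.

Lemma cjoin_cdiff (x y : cube d) : cube_le x y -> cjoin x (cdiff x y) = y.
Proof.
move=> /forallP xy; apply/ffunP => i; rewrite !ffunE.
by move: (xy i); case: (x i); case: (y i).
Qed.

Lemma weight_cdiff (x y : cube d) : cube_le x y -> (weight (cdiff x y) + weight x = weight y)%N.
Proof.
move=> /forallP xy; rewrite /weight -big_split /=; apply: eq_bigr => i _; rewrite ffunE.
by move: (xy i); case: (x i); case: (y i).
Qed.

Lemma weight_lt (x y : cube d) : cube_le x y -> x != y -> (weight x < weight y)%N.
Proof.
move=> xy; apply: contraNT; rewrite -leqNgt -(weight_cdiff xy) -{2}[weight x]add0n leq_add2r.
rewrite leqn0 sum_nat_eq0 => /forallP diff0; rewrite -(cjoin_cdiff xy).
by apply/eqP/ffunP => i; move: (diff0 i); rewrite !ffunE; case: (x i); case: (y i).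
Qed.

Lemma alternating_weight (f : cube d -> bool) c j :
  alternating f c j -> (weight (c 0%N) + j <= weight (c j))%N.
Proof.
elim: j => [|j IH] cj; first by rewrite addn0.
have [c_le c_ne] := cj; rewrite addnS.
apply: leq_ltn_trans (IH (alternating_take cj (leqnSn j))) (weight_lt (c_le j _) _) => //.
by apply: contraNneq (c_ne j (ltnSn j)) => ->.
Qed.

End CubeGeometry.

Definition band d N b : {set cube d} := [set x |
  (d <= 2 * weight x + 2 * b * N + 1)%N && (2 * weight x <= d + 2 * b * N + 1)%N].

Lemma card_out_band (R : realFieldType) d N b : (0 < N)%N -> (d <= N * N)%N ->
  #|~: band d N b|%:R * 4 ^+ b <= 2 ^+ d.+2 :> R.
Proof.
move=> N0 dN; set U := [set x : cube d | (d + 2 * b * N <= 2 * weight x)%N].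
have out_sub : ~: band d N b \subset U :|: @ccompl d @: U.
  apply/subsetP => x; rewrite !inE negb_and -!ltnNge => /orP [x_low|x_high].
    apply/orP; right; apply/imsetP; exists (ccompl x); last by rewrite ccomplK.
    by rewrite ?inE; have := weight_ccompl x; lia.
  by apply/orP; left; rewrite ?inE; lia.
have card_out : (#|~: band d N b| <= 2 * #|U|)%N.
  apply: leq_trans (subset_leq_card out_sub) _.
  by apply: leq_trans (leq_card_setU _ _) _; rewrite mul2n -addnn leq_add2l leq_imset_card.
have := @card_upper_band R d N b N0 dN; rewrite -/U => U_bound.
apply: le_trans (_ : 2 * #|U|%:R * 4 ^+ b <= _).
  by apply: ler_wpM2r; [exact: exprn_ge0 | rewrite -natrM ler_nat].
by rewrite exprS -mulrA ler_pM2l.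
Qed.

Section Tester.
Variables (d k N b r : nat).

Definition mask_radius := (2 * b * N + 1)%N.
Definition mask := {m : cube d | (weight m <= mask_radius)%N}.
Definition num_queries := #|{: 'I_r * mask}|.
Definition seed := {ffun 'I_r -> cube d}.

Definition uniform (R : numFieldType) (w : seed) : R := #|{: seed}|%:R^-1.

Definition query (w : seed) (i : 'I_num_queries) : cube d :=
  let: (j, m) := enum_val i in cjoin (w j) (val m).

Definition decide (w : seed) (ans : 'I_num_queries -> bool) : bool :=
  ~~ `[< exists t : nat -> 'I_num_queries, ans (t 0%N) /\ forall i, (i < k)%N ->
           cube_le (query w (t i)) (query w (t i.+1)) /\ ans (t i) != ans (t i.+1) >].

Lemma card_seed : #|{: seed}| = ((2 ^ d) ^ r)%N.
Proof. by rewrite card_ffun card_cube card_ord. Qed.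

Lemma sum_uniform (R : numFieldType) : \sum_(w : seed) uniform R w = 1.
Proof. by rewrite /uniform sumr_const -[_ *+ _]mulr_natr mulVf // pnatr_eq0 card_seed -lt0n !expn_gt0. Qed.

Lemma accept_prob_k_monotone (R : numFieldType) f :
  k_monotone k f -> accept_prob (uniform R) query decide f = 1.
Proof.
move=> f_mono; rewrite /accept_prob -(sum_uniform R); apply: eq_bigl => w.
apply/negP => /asboolP [t [t0 t_chain]]; apply: f_mono.
by exists (fun i => query w (t i)); split => // i ik; case: (t_chain i ik).
Qed.

Lemma weight0_le : (weight ([ffun=> false] : cube d) <= mask_radius)%N.
Proof. by rewrite /weight big1 // => i _; rewrite ffunE. Qed.

Definition mask0 : mask := exist (fun m : cube d => (weight m <= mask_radius)%N) _ weight0_le.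

(* A violating chain inside the band starting at [w j] climbs by at most
   [mask_radius] in weight, so all of it is queried. *)
Lemma decide_source f (w : seed) j :
  w j \in violation_sources k f (band d N b) ->
  ~~ decide w (fun i => f (query w i)).
Proof.
rewrite inE => /asboolP [c [[c0 c_band c_alt] c0w]]; rewrite negbK; apply/asboolP.
pose t i := enum_rank ((j, insubd mask0 (cdiff (w j) (c i))) : 'I_r * mask).
have queryE i : (i <= k)%N -> query w (t i) = c i.
  move=> ik; rewrite /query /t enum_rankK /=.
  have c0i := alternating_le c_alt (leq0n i) ik; rewrite c0w in c0i.
  rewrite insubdK ?cjoin_cdiff //= unfold_in /=.
  have := weight_cdiff c0i; move: (c_band i ik) (c_band 0%N (leq0n _)).
  by rewrite !inE /mask_radius c0w; lia.
exists t; split; first by rewrite queryE.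
move=> i ik; rewrite !queryE ?(ltnW ik) //.
by have [c_le c_ne] := c_alt; split; [apply: c_le | apply: c_ne].
Qed.

End Tester.

Section Soundness.
Variables (R : realFieldType) (d k N b r : nat) (eps : R) (f : cube d -> bool).
Hypotheses (N0 : (0 < N)%N) (dN : (d <= N * N)%N) (eps_scale : 8 <= eps * 4 ^+ b).

Let sources := violation_sources k f (band d N b).

Let eps_gt0 : 0 < eps.
Proof. by move: eps_scale; rewrite -(pmulr_lgt0 _ (exprn_gt0 b (_ : 0 < 4))) //; lra. Qed.

Lemma card_sources_lower : far_from_k_monotone k eps f ->
  eps * 2 ^+ d / 2 <= k.+1%:R * #|sources|%:R.
Proof.
move=> far; have [g [g_mono g_cost]] := repair_cost k f (band d N b).
have X0 : 0 < 2 ^+ d :> R by exact: exprn_gt0.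
have := far g g_mono; rewrite /dist natrX ler_pdivlMr //.
have -> : #|[pred x | f x != g x]| = #|[set x | f x != g x]| by apply: eq_card => x; rewrite inE.
move: g_cost; rewrite -(ler_nat R) natrD natrM.
set O := #|~: band d N b|%:R; set M := #|[set x | f x != g x]|%:R => M_le far_M.
have out_le : O * 8 <= eps * 2 ^+ d * 4.
  have O0 : 0 <= O by exact: ler0n.
  have := ler_wpM2l O0 eps_scale; have := ler_wpM2l (ltW eps_gt0) (card_out_band R b N0 dN).
  by rewrite -/O !exprS mulrA -natrM; lra.
lra.
Qed.

Lemma k_le_mask_radius x : x \in sources -> (k <= mask_radius N b)%N.
Proof.
rewrite inE => /asboolP [c [[_ c_band c_alt] _]].
have := alternating_weight c_alt; move: (c_band k (leqnn k)) (c_band 0%N (leq0n _)).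
by rewrite !inE /mask_radius; lia.
Qed.

Lemma accept_prob_le_miss :
  accept_prob (uniform R) (@query d N b r) (@decide d k N b r) f
    <= (1 - #|sources|%:R / 2 ^+ d) ^+ r.
Proof.
pose acc := [pred w : seed d r | @decide d k N b r w (fun i => f (@query d N b r w i))].
have X0 : 0 < 2 ^+ d :> R by exact: exprn_gt0.
have card_acc : #|acc|%:R <= (2 ^+ d - #|sources|%:R) ^+ r :> R.
  have compl : #|~: sources|%:R = 2 ^+ d - #|sources|%:R :> R.
    by apply/eqP; rewrite eq_sym subr_eq addrC -natrD cardsC card_cube natrX.
  rewrite -compl -natrX ler_nat.
  have : #|ffun_on_mem 'I_r (mem (~: sources))| = (#|~: sources| ^ r)%N.
    by rewrite card_ffun_on card_ord.
  move <-; apply: subset_leq_card; apply/subsetP => w; rewrite unfold_in /= => accw.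
  by apply/ffun_onP => j; rewrite inE; apply: contraL accw => /decide_source.
have -> : 1 - #|sources|%:R / 2 ^+ d = (2 ^+ d - #|sources|%:R) / 2 ^+ d :> R.
  by rewrite mulrBl divff ?gt_eqF.
rewrite /accept_prob /uniform sumr_const -[_ *+ _]mulr_natr mulrC card_seed !natrX.
by rewrite expr_div_n ler_pM2r ?invr_gt0 ?exprn_gt0.
Qed.

Lemma accept_prob_far : far_from_k_monotone k eps f ->
  4 * (mask_radius N b).+1%:R <= r%:R * eps ->
  accept_prob (uniform R) (@query d N b r) (@decide d k N b r) f <= 1 / 3.
Proof.
move=> far er; have lower := card_sources_lower far.
have X0 : 0 < 2 ^+ d :> R by exact: exprn_gt0.
have [x xsrc] : exists x, x \in sources.
  apply/set0Pn; apply: contraTneq lower => ->; rewrite cards0 mulr0 -ltNge.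
  by rewrite divr_gt0 ?mulr_gt0.
have k_le : k.+1%:R <= (mask_radius N b).+1%:R :> R by rewrite ler_nat ltnS (k_le_mask_radius xsrc).
have src0 : 0 <= #|sources|%:R :> R by exact: ler0n.
have miss : 2 * 2 ^+ d <= r%:R * #|sources|%:R :> R.
  rewrite -(ler_pM2l eps_gt0).
  have := ler_wpM2r src0 er; have := ler_wpM2r src0 k_le; nra.
apply: le_trans accept_prob_le_miss _; apply: one_sub_expr_le_third.
- by rewrite divr_ge0 // ltW.
- by rewrite ler_pdivrMr // mul1r -natrX ler_nat -card_cube max_card.
- by rewrite mulrA ler_pdivlMr.
Qed.

End Soundness.

Lemma not_far_above_half (R : realFieldType) d k (eps : R) (f : cube d -> bool) :
  (0 < k)%N -> 1 / 2 < eps -> ~ far_from_k_monotone k eps f.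
Proof.
move=> k0 eps_gt far.
have zero_mono : k_monotone k (fun _ : cube d => false) by move=> [c []].
have one_mono : k_monotone k (fun _ : cube d => true).
  by move=> [c [_ _ c_ne]]; move: (c_ne 0%N k0); rewrite eqxx.
have := far _ zero_mono; have := far _ one_mono; rewrite /dist.
have X0 : 0 < (2 ^ d)%:R :> R by rewrite ltr0n expn_gt0.
have card_split : (#|[pred x | f x != false]| + #|[pred x | f x != true]|)%:R = (2 ^ d)%:R :> R.
  rewrite -card_cube -(cardC [pred x : cube d | f x]); congr (_ + _)%:R;
  by apply: eq_card => x; rewrite !inE; case: (f x).
rewrite !ler_pdivlMr // natrD in card_split *; nra.
Qed.

Lemma tester_above_half (R : realFieldType) d k (eps : R) : (0 < k)%N -> 1 / 2 < eps ->
  one_sided_na_tester k eps (fun _ : unit => 1) (fun _ (_ : 'I_0) => [ffun=> false] : cube d)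
    (fun _ _ => true).
Proof.
move=> k0 eps_gt; split => //.
- by rewrite sumr_const card_unit.
- by move=> f _; rewrite /accept_prob sumr_const card_unit.
- by move=> f /(not_far_above_half k0 eps_gt).
Qed.

Lemma dyadic_scale (R : realType) (eps : R) : 0 < eps -> eps <= 1 / 2 ->
  exists a, [/\ (0 < a)%N, 1 <= eps * 2 ^+ a & a%:R * ln 2 <= 2 * ln (1 / eps)].
Proof.
move=> eps0 eps_le.
have exA : exists a, 1 <= eps * 2 ^+ a.
  have inv0 : 0 <= eps^-1 by rewrite invr_ge0 ltW.
  exists (Num.Def.archi_bound eps^-1); rewrite -ler_pdivrMl // mulr1.
  apply: le_trans (ltW (archi_boundP inv0)) _.
  by rewrite -natrX ler_nat ltnW // ltn_expl.
case: (ex_minnP exA) => a a_scale a_min.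
have a0 : (0 < a)%N by rewrite lt0n; apply: contraTneq a_scale => ->; rewrite expr0 mulr1 -ltNge; lra.
have a_prev : 2 ^+ a.-1 < 1 / eps.
  rewrite ltr_pdivlMr // mulrC ltNge; apply/negP => /a_min.
  by rewrite -ltnS prednK // ltnn.
exists a; split => //.
have inv_pos : 1 / eps \in Num.pos by rewrite posrE divr_gt0.
have ln_prev : a.-1%:R * ln 2 <= ln (1 / eps).
  rewrite mulr_natl -lnXn // ler_ln ?ltW // posrE exprn_gt0 //.
have ln2_le : ln 2 <= ln (1 / eps).
  by rewrite ler_ln ?posrE // ler_pdivlMr // mulrC -ler_pdivlMr //; lra.
by rewrite -(prednK a0) -natr1 mulrDl mul1r; lra.
Qed.

Lemma isqrt_bound (R : realType) d : (0 < d)%N ->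
  exists N, [/\ (0 < N)%N, (d <= N * N)%N & N%:R <= 2 * Num.sqrt d%:R :> R].
Proof.
move=> d0; have exN : exists N, (d <= N * N)%N by exists d; rewrite leq_pmulr.
case: (ex_minnP exN) => N dN N_min.
have N0 : (0 < N)%N by rewrite lt0n; apply: contraTneq dN => ->; rewrite -ltnNge.
exists N; split => //.
have sqrt1 : 1 <= Num.sqrt d%:R :> R.
  by rewrite -[X in X <= _]sqrtr1 ler_sqrt ?ler0n // ler1n.
have prev : N.-1%:R < Num.sqrt d%:R :> R.
  rewrite -[N.-1%:R]ger0_norm ?ler0n // -sqrtr_sqr ltr_sqrt ?ltr0n // -natrX ltr_nat.
  rewrite ltnNge -mulnn; apply/negP => /N_min.
  by rewrite -ltnS prednK // ltnn.
by rewrite -(prednK N0) -natr1; lra.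
Qed.

Lemma leq_expn2r m n e : (m <= n)%N -> (m ^ e <= n ^ e)%N.
Proof. by move=> mn; elim: e => // e IH; rewrite !expnS leq_mul. Qed.

Lemma num_queries_le d N b r : (0 < d)%N ->
  (num_queries d N b r <= r * (2 * (2 * d) ^ mask_radius N b))%N.
Proof.
move=> d0; rewrite /num_queries card_prod card_ord leq_mul2l card_sig; apply/orP; right.
have -> : #|[pred m : cube d | (weight m <= mask_radius N b)%N]|
    = #|[set m : cube d | (weight m <= mask_radius N b)%N]|.
  by apply: eq_card => m; rewrite inE.
by rewrite -(ler_nat rat) natrM natrX; exact: card_weight_le.
Qed.

Lemma query_budget d s a : (2 <= d)%N ->
  (4 * s.+1 * 2 ^ a * (2 * (2 * d) ^ s) <= d ^ (3 * s + 3 + a))%N.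
Proof.
move=> d2.
have chain_le : (4 * s.+1 * 2 <= d ^ (s + 3))%N.
  apply: leq_trans (leq_expn2r _ d2); have := ltn_expl s (isT : (1 < 2)%N).
  by rewrite expnD; lia.
have scale_le : (2 ^ a <= d ^ a)%N by exact: leq_expn2r.
have masks_le : ((2 * d) ^ s <= d ^ (2 * s))%N.
  by rewrite mulnC expnM; apply: leq_expn2r; rewrite -mulnn leq_mul2l d2 orbT.
rewrite (_ : 3 * s + 3 + a = s + 3 + a + 2 * s)%N; last lia.
rewrite (expnD d (s + 3 + a)) (expnD d (s + 3)).
have -> : (4 * s.+1 * 2 ^ a * (2 * (2 * d) ^ s) = 4 * s.+1 * 2 * 2 ^ a * (2 * d) ^ s)%N by ring.
by apply: leq_mul => //; apply: leq_mul.
Qed.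

Lemma natr_le_expR (R : realType) q d E : (0 < d)%N -> (q <= d ^ E)%N ->
  q%:R <= expR (E%:R * ln d%:R) :> R.
Proof.
move=> d0 qd; have dR : 0 < d%:R :> R by rewrite ltr0n.
by rewrite mulr_natl -lnXn // lnK ?posrE ?exprn_gt0 // -natrX ler_nat.
Qed.

Lemma query_exponent_le (R : realType) d N a (eps : R) : (0 < a)%N -> (0 < N)%N ->
  (2 <= d)%N -> a%:R * ln 2 <= 2 * ln (1 / eps) -> N%:R <= 2 * Num.sqrt (d%:R : R) ->
  (3 * mask_radius N (a + 2) + 3 + a)%:R * ln d%:R
    <= 100 / ln 2 * Num.sqrt d%:R * ln d%:R * ln (1 / eps) :> R.
Proof.
move=> a0 N0 d2 a_ln N_sqrt.
have E_le : ((3 * mask_radius N (a + 2) + 3 + a) <= 25 * a * N)%N by rewrite /mask_radius; nia.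
move: E_le; rewrite -(ler_nat R) !natrM => E_le.
have ln2 : 0 < ln 2 :> R by apply: ln_gt0; lra.
have lnd : 0 <= ln d%:R :> R by apply: ln_ge0; rewrite ler1n ltnW.
have a_pos : 0 <= a%:R :> R by exact: ler0n.
have N_pos : 0 <= N%:R :> R by exact: ler0n.
set E := _%:R in E_le *; set S := Num.sqrt _ in N_sqrt *; set Le := ln (1 / eps) in a_ln *.
have Le0 : 0 <= Le.
  have : 0 < a%:R * ln 2 :> R by rewrite mulr_gt0 ?ltr0n.
  lra.
have E_ln2 : E * ln 2 <= 100 * S * Le.
  have N25 : 0 <= 25 * N%:R :> R by lra.
  have Le50 : 0 <= 50 * Le by lra.
  have := ler_wpM2r (ltW ln2) E_le; have := ler_wpM2l N25 a_ln.
  have := ler_wpM2r Le50 N_sqrt; lra.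
have -> : 100 / ln 2 * S * ln d%:R * Le = ln d%:R * (100 * S * Le / ln 2) by ring.
by rewrite mulrC; apply: ler_wpM2l => //; rewrite ler_pdivlMr.
Qed.

Lemma tester_below_half (R : realType) d k (eps : R) : (2 <= d)%N -> 0 < eps -> eps <= 1 / 2 ->
  exists q : nat,
    q%:R <= expR (100 / ln 2 * Num.sqrt (d%:R) * ln (d%:R) * ln (1 / eps)) /\
    exists (Om : finType) (p : Om -> R) (Q : Om -> 'I_q -> cube d)
           (D : Om -> ('I_q -> bool) -> bool),
      one_sided_na_tester k eps p Q D.
Proof.
move=> d2 eps0 eps_le; have d0 : (0 < d)%N by exact: ltnW.
have [a [a0 scale a_ln]] := dyadic_scale eps0 eps_le.
have [N [N0 dN N_sqrt]] := isqrt_bound R d0.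
pose b := (a + 2)%N; pose s := mask_radius N b; pose r := (4 * s.+1 * 2 ^ a)%N.
exists (num_queries d N b r); split.
  apply: le_trans (natr_le_expR R d0 (leq_trans (num_queries_le _ _ r d0) (query_budget _ _ d2))) _.
  by rewrite ler_expR; exact: query_exponent_le.
exists (seed d r), (uniform R), (@query d N b r), (@decide d k N b r); split.
- by move=> w; rewrite /uniform invr_ge0 ler0n.
- exact: sum_uniform.
- exact: accept_prob_k_monotone.
- move=> f far; apply: accept_prob_far N0 dN _ far _.
  + have : 2 ^+ a <= 4 ^+ a :> R by apply: lerXn2r; rewrite ?nnegrE //; lra.
    by rewrite exprD (_ : 4 ^+ 2 = 16 :> R) ?expr2 -?natrM //; nra.
  + by rewrite /r !natrM natrX mulrAC -mulrA ler_peMr ?mulr_ge0 // mulrC.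
Qed.

Theorem theorem1p2 (R : realType) :
  exists C : R, 0 < C /\
  forall (d k : nat) (eps : R), (2 <= d)%N -> (1 <= k)%N -> 0 < eps -> eps < 1 ->
  exists q : nat,
    q%:R <= expR (C * Num.sqrt (d%:R) * ln (d%:R) * ln (1 / eps)) /\
    exists (Om : finType) (p : Om -> R) (Q : Om -> 'I_q -> cube d)
           (D : Om -> ('I_q -> bool) -> bool),
      one_sided_na_tester k eps p Q D.
Proof.
exists (100 / ln 2); split; first by rewrite divr_gt0 // ln_gt0 //; lra.
move=> d k eps d2 k0 eps0 _; have [eps_le|eps_gt] := lerP eps (1 / 2).
  exact: tester_below_half.
exists 0%N; split; first exact: expR_ge0.
by do 4 eexists; exact: tester_above_half.
Qed.
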